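(* For every $\varepsilon\in(0,2)$ there exists $\varepsilon'\in(0,2)$ such that the following holds: if $f:[0,\infty)\to[0,\infty)$ is a monotone function belonging to the Gurov–Reshetnyak class $\mathcal{GR}_{\mathbb R_+}(\varepsilon)$, then its even extension $\tilde f:\mathbb R\to[0,\infty)$, $\tilde f(x)=f(|x|)$, belongs to $\mathcal{GR}_{\mathbb R}(\varepsilon')$.
   Context: Let $R$ be either $\mathbb R$ or $\mathbb R_+=[0,\infty)$. For a non-negative function $f$ that is locally summable on $R$ (i.e. summable on each bounded subinterval of $R$) and a bounded interval $I\subset R$, put $f_I=\frac1{|I|}\int_I f(x)\,dx$ and $\Omega(f;I)=\frac1{|I|}\int_I|f(x)-f_I|\,dx$, where $|I|$ is the length of $I$. For $\varepsilon\in(0,2]$, the Gurov–Reshetnyak class $\mathcal{GR}_R(\varepsilon)$ is the set of all non-negative locally summable functions $f$ on $R$ such that $\Omega(f;I)\le\varepsilon f_I$ for all bounded intervals $I\subset R$. *)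

From HB Require Import structures.
From mathcomp Require Import all_boot all_order all_algebra.
From mathcomp Require Import all_classical all_reals all_analysis.
Set Implicit Arguments. Unset Strict Implicit. Unset Printing Implicit Defensive.
Import Order.TTheory GRing.Theory Num.Theory.
Local Open Scope classical_set_scope.
Local Open Scope ring_scope.

Section GR.
Variable R : realType.
Local Notation mu := (@lebesgue_measure R).

Definition mean (f : R -> R) (a b : R) : R :=
  (b - a)^-1 * Rintegral mu `[a, b] f.

Definition Omega (f : R -> R) (a b : R) : R :=
  (b - a)^-1 * Rintegral mu `[a, b] (fun x => `|f x - mean f a b|).

Definition GR_R (eps : R) (f : R -> R) : Prop :=
  [/\ (forall x, 0 <= f x),
      (forall a b, a < b -> mu.-integrable `[a, b] (EFin \o f)) &
      (forall a b, a < b -> Omega f a b <= eps * mean f a b)].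

(* Gurov-Reshetnyak class on R_+ = [0, +oo): only values on [0,+oo) matter *)
Definition GR_Rplus (eps : R) (f : R -> R) : Prop :=
  [/\ (forall x, 0 <= x -> 0 <= f x),
      (forall a b, 0 <= a -> a < b -> mu.-integrable `[a, b] (EFin \o f)) &
      (forall a b, 0 <= a -> a < b -> Omega f a b <= eps * mean f a b)].

Definition monotone_Rplus (f : R -> R) : Prop :=
  (forall x y, 0 <= x -> x <= y -> f x <= f y) \/
  (forall x y, 0 <= x -> x <= y -> f y <= f x).

End GR.

From HB Require Import structures.
From mathcomp Require Import all_boot all_order all_algebra.
From mathcomp Require Import all_classical all_reals all_analysis.
From mathcomp Require Import measurable_realfun lra.

(* One may take eps' = 3/2 + eps/4.
   Since |q - m| = q + m - 2 min(q, m), the mean oscillation of q on I equals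
   2 (q_I - (min(q, q_I))_I).  The even extension F is symmetric under x -> -x,
   so it suffices to treat I = [a, b] with a + b >= 0.  If a >= 0 then F = f
   on I.  Otherwise J = [0, b] carries at least half of the mass of F on I and
   |I| <= 2 |J|, so f_J <= 2 F_I and min(f, f_J) / 2 <= min(F, F_I) on J.  The
   GR condition on J gives int_J min(f, f_J) >= (1 - eps/2) int_J f
   >= (1 - eps/2) int_I F / 2, whence Omega(F; I) <= (2 - (1 - eps/2)/2) F_I. *)

Set Implicit Arguments.
Unset Strict Implicit.
Unset Printing Implicit Defensive.

Import Order.TTheory GRing.Theory Num.Theory.
Local Open Scope classical_set_scope.
Local Open Scope ring_scope.

Section integrable_set.
Context d (T : measurableType d) (R : realType) (mu : {measure set T -> \bar R}).

Lemma integrable_setU (A B : set T) (h : T -> \bar R) :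
  measurable A -> measurable B ->
  mu.-integrable A h -> mu.-integrable B h -> mu.-integrable (A `|` B) h.
Proof.
move=> mA mB /integrableP[mhA hA] /integrableP[mhB hB].
have mhAB : measurable_fun (A `|` B) h by apply/measurable_funU.
apply/integrableP; split => //.
have mBA : measurable (B `\` A) by exact: measurableD.
have AB : A `|` B = A `|` (B `\` A) by rewrite setUDr setDv setD0.
rewrite AB ge0_integral_setU //.
- apply: lte_add_pinfty => //; apply: le_lt_trans hB.
  apply: ge0_subset_integral => //; first exact: measurableT_comp.
- by rewrite -AB; exact: measurableT_comp.
- by rewrite setDE disj_set2E setICA setICr setI0.
Qed.

Lemma integrable_minr (D : set T) (q : T -> R) (k : R) : measurable D ->
  mu.-integrable D (EFin \o q) -> (forall x, D x -> 0 <= q x) -> 0 <= k ->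
  mu.-integrable D (EFin \o (fun x => Num.min (q x) k)).
Proof.
move=> mD iq q0 k0; apply: le_integrable (iq) => //.
- apply/measurable_EFinP; apply: (measurable_minr _ (measurable_cst k)).
  by apply/measurable_EFinP; exact: measurable_int iq.
- move=> x Dx; rewrite lee_fin !ger0_norm ?le_min ?q0 ?k0 //.
  by rewrite ge_min lexx.
Qed.

Lemma integrable_scaler (D : set T) (q : T -> R) (c : R) : measurable D ->
  mu.-integrable D (EFin \o q) -> mu.-integrable D (EFin \o (fun x => c * q x)).
Proof.
move=> mD iq; rewrite (_ : EFin \o _ = (fun x => c%:E * (EFin \o q) x))%E //.
exact: integrableZl.
Qed.

Lemma ge0_subset_Rintegral (D E : set T) (q : T -> R) :
  measurable D -> measurable E -> D `<=` E ->
  mu.-integrable E (EFin \o q) -> (forall x, E x -> 0 <= q x) ->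
  \int[mu]_(x in D) q x <= \int[mu]_(x in E) q x.
Proof.
move=> mD mE DE iq q0; rewrite fine_le //.
- exact: integrable_fin_num (integrableS mE mD DE iq).
- exact: integrable_fin_num.
apply: ge0_subset_integral => //; exact: measurable_int iq.
Qed.

End integrable_set.

Lemma le_half_minr (R : realFieldType) (x k m : R) : 0 <= x -> k <= 2 * m ->
  2^-1 * Num.min x k <= Num.min x m.
Proof.
move=> x0 km; rewrite le_min; apply/andP.
by case: (leP x k) => xk; split; lra.
Qed.

Section interval_integral.
Context {R : realType}.
Local Notation mu := (@lebesgue_measure R).
Implicit Types (a b c : R) (q : R -> R).

Lemma ge0_integral_itv_comp_opp (h : R -> \bar R) a b :
  measurable_fun `[a, b] h -> (forall x, a <= x <= b -> (0 <= h x)%E) ->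
  (\int[mu]_(x in `[(- b)%R, (- a)%R]) h (- x)%R = \int[mu]_(x in `[a, b]) h x)%E.
Proof.
move=> mh h0.
have -> : `[- b, - a]%classic = (-%R : R -> measurableTypeR R) @^-1` `[a, b].
  by rewrite opp_preimage_itvbndbnd.
have mN : measurable_fun [set: measurableTypeR R] (-%R : R -> measurableTypeR R).
  exact: oppr_measurable.
rewrite -(ge0_integral_pushforward mN) //; last first.
  by move=> x; rewrite inE /= in_itv /= => /h0.
by apply: eq_measure_integral => //= A mA _; rewrite lebesgue_measureN.
Qed.

Lemma Rintegral_itv_comp_opp q a b :
  measurable_fun `[a, b] q -> (forall x, a <= x <= b -> 0 <= q x) ->
  \int[mu]_(x in `[- b, - a]) q (- x) = \int[mu]_(x in `[a, b]) q x.
Proof.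
move=> mq q0; congr fine; apply: (ge0_integral_itv_comp_opp (h := EFin \o q)).
- exact/measurable_EFinP.
- by move=> x /q0; rewrite lee_fin.
Qed.

Lemma Rintegral_itv_split q a c b : a <= c -> c <= b ->
  mu.-integrable `[a, b] (EFin \o q) ->
  \int[mu]_(x in `[a, b]) q x =
  \int[mu]_(x in `[a, c]) q x + \int[mu]_(x in `[c, b]) q x.
Proof.
move=> ac cb iq.
rewrite -[X in _ + X]Rintegral_itv_obnd_cbnd; last first.
  by apply: integrableS iq => //; apply: subset_itvr; rewrite bnd_simp.
by rewrite -(@Rintegral_itvB _ _ _ _ c iq) ?bnd_simp // addrC subrK.
Qed.

Lemma integrable_itv_cst a b k : mu.-integrable `[a, b] (EFin \o cst k).
Proof.
apply: measurable_bounded_integrable => //; last exact: bounded_cst.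
by rewrite /= lebesgue_measure_itv; case: ifP => _; rewrite ?ltry.
Qed.

Lemma mean_ge0 q a b : a < b -> (forall x, a <= x <= b -> 0 <= q x) ->
  0 <= mean q a b.
Proof.
move=> ab q0; apply: mulr_ge0; first by rewrite invr_ge0 subr_ge0 ltW.
by apply: Rintegral_ge0 => x; rewrite /= in_itv /= => /q0.
Qed.

Lemma mulr_mean q a b : a < b -> (b - a) * mean q a b = \int[mu]_(x in `[a, b]) q x.
Proof. by move=> ab; rewrite mulVKf // subr_eq0 gt_eqF. Qed.

Lemma eq_mean q1 q2 a b : {in `[a, b]%classic, q1 =1 q2} -> mean q1 a b = mean q2 a b.
Proof. by move=> q12; rewrite /mean; congr (_ * _); exact: eq_Rintegral. Qed.

Lemma eq_Omega q1 q2 a b : {in `[a, b]%classic, q1 =1 q2} -> Omega q1 a b = Omega q2 a b.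
Proof.
move=> q12; rewrite /Omega (eq_mean q12); congr (_ * _).
by apply: eq_Rintegral => x xab; rewrite q12.
Qed.

Lemma Omega_le_mulr_mean q a b c : a < b ->
  (Omega q a b <= c * mean q a b) =
  (\int[mu]_(x in `[a, b]) `|q x - mean q a b| <= c * \int[mu]_(x in `[a, b]) q x).
Proof.
by move=> ab; rewrite /Omega {2}/mean mulrCA ler_pM2l // invr_gt0 subr_gt0.
Qed.

Lemma Rintegral_abs_sub_mean q a b : a < b ->
  mu.-integrable `[a, b] (EFin \o q) -> (forall x, a <= x <= b -> 0 <= q x) ->
  \int[mu]_(x in `[a, b]) `|q x - mean q a b| =
  2 * \int[mu]_(x in `[a, b]) q x -
  2 * \int[mu]_(x in `[a, b]) Num.min (q x) (mean q a b).
Proof.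
move=> ab iq q0; have := mulr_mean q ab; have := mean_ge0 ab q0.
set m := mean q a b => m0 mE.
have im : mu.-integrable `[a, b] (EFin \o (fun x => Num.min (q x) m)).
  by apply: integrable_minr => // x; rewrite /= in_itv /= => /q0.
clearbody m.
transitivity (\int[mu]_(x in `[a, b]) (q x + m - 2 * Num.min (q x) m)).
  apply: eq_Rintegral => x _; case: (leP (q x) m) => qm.
  - by rewrite ler0_norm ?subr_le0 //; lra.
  - by rewrite gtr0_norm ?subr_gt0 //; lra.
rewrite RintegralB //; last 2 first.
- rewrite (_ : EFin \o _ = (EFin \o q) \+ (EFin \o cst m))%E; last exact/funext.
  by apply: integrableD => //; exact: integrable_itv_cst.
- exact: integrable_scaler.
rewrite RintegralD //; last exact: integrable_itv_cst.
rewrite RintegralZl // Rintegral_cst // /= lebesgue_measure_itv /= lte_fin ab /=.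
by rewrite mulrC mE; lra.
Qed.

Lemma mean_itv_opp q a b : (forall x, q (- x) = q x) ->
  measurable_fun `[a, b] q -> (forall x, a <= x <= b -> 0 <= q x) ->
  mean q (- b) (- a) = mean q a b.
Proof.
move=> qN mq q0; rewrite /mean opprK addrC -(Rintegral_itv_comp_opp mq q0).
by congr (_ * _); apply: eq_Rintegral => x _; rewrite qN.
Qed.

Lemma Omega_itv_opp q a b : (forall x, q (- x) = q x) ->
  measurable_fun `[a, b] q -> (forall x, a <= x <= b -> 0 <= q x) ->
  Omega q (- b) (- a) = Omega q a b.
Proof.
move=> qN mq q0; rewrite /Omega (mean_itv_opp qN mq q0) opprK addrC.
congr (_ * _); rewrite -(Rintegral_itv_comp_opp (a := a) (b := b)).
- by apply: eq_Rintegral => x _; rewrite qN.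
- by apply: measurableT_comp => //; apply: measurable_funB.
- by move=> *; exact: normr_ge0.
Qed.

End interval_integral.

Section even_extension.
Context {R : realType}.
Local Notation mu := (@lebesgue_measure R).
Variable f : R -> R.
Hypothesis f_ge0 : forall x, 0 <= x -> 0 <= f x.
Hypothesis f_int : forall a b, 0 <= a -> a < b -> mu.-integrable `[a, b] (EFin \o f).
Local Notation fe := (fun x : R => f `|x|).
Implicit Types a b : R.

Lemma even_ext_ge0 x : 0 <= fe x.
Proof. exact: f_ge0. Qed.

Lemma even_extN x : fe (- x) = fe x.
Proof. by rewrite /= normrN. Qed.

Lemma integrable_even_ext_sym n : 0 < n -> mu.-integrable `[- n, n] (EFin \o fe).
Proof.
move=> n_gt0; have f_n := f_int (lexx 0) n_gt0.
have int_pos : mu.-integrable `[0, n] (EFin \o fe).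
  apply: eq_integrable f_n => // x; rewrite inE /= in_itv /= => /andP[x0 _].
  by rewrite /= ger0_norm.
have int_neg : mu.-integrable `[- n, 0] (EFin \o fe).
  apply/integrableP; split.
    apply/measurable_EFinP; apply: (measurable_comp (F := `[0, n])) => //.
    - move=> _ [x /= + <-]; rewrite !in_itv /= => /andP[nx x0].
      by rewrite normr_ge0 ler0_norm //; lra.
    - by apply/measurable_EFinP; exact: measurable_int f_n.
  under eq_integral => x _ do rewrite /= -[`|x|]normrN.
  rewrite -{1}oppr0 (ge0_integral_itv_comp_opp (h := fun x => `|(fe x)%:E|%E)) //.
  + by case/integrableP : int_pos.
  + apply: measurableT_comp => //; apply/measurable_EFinP.
    by apply/measurable_EFinP; exact: measurable_int int_pos.
apply: integrableS (integrable_setU _ _ int_neg int_pos) => //.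
- exact: measurableU.
- move=> x /=; rewrite !in_itv /= => /andP[nx xn].
  by case: (leP x 0) => x0; [left|right]; apply/andP; split => //; lra.
Qed.

Lemma integrable_even_ext a b : mu.-integrable `[a, b] (EFin \o fe).
Proof.
move: (ler_norm (- a)) (ler_norm b) (normr_ge0 a) (normr_ge0 b).
rewrite normrN => Na Nb a0 b0.
have n_gt0 : 0 < `|a| + `|b| + 1 by lra.
apply: integrableS (integrable_even_ext_sym n_gt0) => //.
by move=> x /=; rewrite !in_itv /= => /andP[ax xb]; apply/andP; split; lra.
Qed.

Lemma measurable_even_ext a b : measurable_fun `[a, b] fe.
Proof. by apply/measurable_EFinP; exact: measurable_int (integrable_even_ext a b). Qed.

Lemma mean_even_ext_opp a b : mean fe (- b) (- a) = mean fe a b.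
Proof.
apply: (mean_itv_opp (q := fe)); first exact: even_extN.
  exact: measurable_even_ext.
by move=> x _; exact: even_ext_ge0.
Qed.

Lemma Omega_even_ext_opp a b : Omega fe (- b) (- a) = Omega fe a b.
Proof.
apply: (Omega_itv_opp (q := fe)); first exact: even_extN.
  exact: measurable_even_ext.
by move=> x _; exact: even_ext_ge0.
Qed.

Lemma Rintegral_even_ext_split a b : a <= 0 -> 0 <= b ->
  \int[mu]_(x in `[a, b]) f `|x| =
  \int[mu]_(x in `[0, - a]) f x + \int[mu]_(x in `[0, b]) f x.
Proof.
move=> a0 b0; rewrite (Rintegral_itv_split a0 b0 (integrable_even_ext a b)).
have -> : \int[mu]_(x in `[a, 0]) f `|x| = \int[mu]_(x in `[0, - a]) f `|x|.
  rewrite -(Rintegral_itv_comp_opp (@measurable_even_ext 0 (- a))) ?opprK ?oppr0.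
    by apply: eq_Rintegral => x _; rewrite /= normrN.
  by move=> x _; exact: even_ext_ge0.
by congr (_ + _); apply: eq_Rintegral => x; rewrite inE /= in_itv /= => /andP[x0 _];
  rewrite ger0_norm.
Qed.

Variable eps : R.
Hypothesis f_osc : forall a b, 0 <= a -> a < b -> Omega f a b <= eps * mean f a b.

Lemma Omega_even_ext_itv_ge0 a b : eps <= 2 -> 0 <= a -> a < b ->
  Omega fe a b <= (3 / 2 + eps / 4) * mean fe a b.
Proof.
move=> eps_le2 a0 ab; have fe_f : {in `[a, b]%classic, fe =1 f}.
  by move=> x; rewrite inE /= in_itv /= => /andP[ax _]; rewrite ger0_norm //; lra.
rewrite (eq_Omega fe_f) (eq_mean fe_f); apply: le_trans (f_osc a0 ab) _.
apply: ler_wpM2r; last lra.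
by apply: mean_ge0 => // x /andP[ax _]; apply: f_ge0; lra.
Qed.

Lemma mean_even_ext_le a b : a < 0 -> 0 <= a + b -> mean f 0 b <= 2 * mean fe a b.
Proof.
move=> a_lt0 ab_ge0; have b_gt0 : 0 < b by lra.
have ab : a < b by lra.
rewrite -(ler_pM2l b_gt0); have := mulr_mean f b_gt0; rewrite subr0 => ->.
apply: (@le_trans _ _ ((b - a) * mean fe a b)).
  rewrite mulr_mean // (Rintegral_even_ext_split (ltW a_lt0) (ltW b_gt0)) lerDr.
  by apply: Rintegral_ge0 => x; rewrite /= in_itv /= => /andP[/f_ge0].
rewrite [leRHS]mulrA; apply: ler_wpM2r; last lra.
by apply: mean_ge0 => // x _; exact: even_ext_ge0.
Qed.

Lemma Rintegral_min_even_ext_ge a b m k : a <= 0 -> 0 < b -> 0 <= k <= 2 * m ->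
  2^-1 * \int[mu]_(x in `[0, b]) Num.min (f x) k <=
  \int[mu]_(x in `[a, b]) Num.min (f `|x|) m.
Proof.
move=> a0 b_gt0 /andP[k0 km]; have m0 : 0 <= m by lra.
have sub_I : `[0, b] `<=` `[a, b].
  by move=> x /=; rewrite !in_itv /= => /andP[x0 ->]; rewrite (le_trans a0).
have iminI : mu.-integrable `[a, b] (EFin \o (fun x => Num.min (fe x) m)).
  by apply: integrable_minr => // [|x _]; [exact: integrable_even_ext|exact: even_ext_ge0].
have iminJ : mu.-integrable `[0, b] (EFin \o (fun x => Num.min (f x) k)).
  apply: integrable_minr => //; first exact: f_int.
  by move=> x; rewrite /= in_itv /= => /andP[/f_ge0].
rewrite -RintegralZl //; apply: (@le_trans _ _ (\int[mu]_(x in `[0, b]) Num.min (f `|x|) m)).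
  apply: le_Rintegral => //; first exact: integrable_scaler.
  - exact: integrableS iminI.
  - move=> x; rewrite /= in_itv /= => /andP[x0 _].
    by rewrite ger0_norm // le_half_minr ?f_ge0.
by apply: ge0_subset_Rintegral => // x _; rewrite le_min even_ext_ge0.
Qed.

Lemma Omega_even_ext_straddle a b : eps <= 2 -> a < 0 -> 0 <= a + b ->
  Omega fe a b <= (3 / 2 + eps / 4) * mean fe a b.
Proof.
move=> eps_le2 a_lt0 ab_ge0; have b_gt0 : 0 < b by lra.
have ab : a < b by lra.
have osc_J := f_osc (lexx 0) b_gt0.
rewrite Omega_le_mulr_mean // Rintegral_abs_sub_mean // in osc_J; last 2 first.
- exact: f_int.
- by move=> x /andP[/f_ge0].
rewrite Omega_le_mulr_mean // Rintegral_abs_sub_mean //; last 2 first.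
- exact: integrable_even_ext.
- by move=> x _; exact: even_ext_ge0.
have mJ_bound : 0 <= mean f 0 b <= 2 * mean fe a b.
  by rewrite mean_even_ext_le // andbT; apply: mean_ge0 => // x /andP[/f_ge0].
have min_I := Rintegral_min_even_ext_ge (ltW a_lt0) b_gt0 mJ_bound.
have SA_ge0 : 0 <= \int[mu]_(x in `[0, - a]) f x.
  by apply: Rintegral_ge0 => x; rewrite /= in_itv /= => /andP[/f_ge0].
have SA_le : \int[mu]_(x in `[0, - a]) f x <= \int[mu]_(x in `[0, b]) f x.
  apply: ge0_subset_Rintegral => //.
  - by move=> x /=; rewrite !in_itv /= => /andP[-> xa]; apply: le_trans xa _; lra.
  - exact: f_int.
  - by move=> x; rewrite /= in_itv /= => /andP[/f_ge0].
rewrite (Rintegral_even_ext_split (ltW a_lt0) (ltW b_gt0)).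
set SA := \int[mu]_(x in `[0, - a]) f x in SA_ge0 SA_le *.
set SJ := \int[mu]_(x in `[0, b]) f x in osc_J SA_le *.
set MI := \int[mu]_(x in `[a, b]) _ in min_I *.
set NJ := \int[mu]_(x in `[0, b]) _ in osc_J min_I.
clearbody SA SJ MI NJ.
have : 0 <= (2 - eps) * (SJ - SA) by apply: mulr_ge0; rewrite subr_ge0.
lra.
Qed.

End even_extension.

Theorem lemma2p1 (R : realType) (eps : R) :
  0 < eps < 2 ->
  exists eps' : R, 0 < eps' < 2 /\
    forall f : R -> R, monotone_Rplus f -> GR_Rplus eps f ->
      GR_R eps' (fun x => f `|x|).
Proof.
move=> /andP[eps_gt0 eps_lt2]; exists (3 / 2 + eps / 4); split.
  by apply/andP; split; lra.
have eps_le2 := ltW eps_lt2.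
move=> f _ [f_ge0 f_int f_osc]; split => [x|a b _|a b ab]; first exact: f_ge0.
  exact: integrable_even_ext.
wlog ab_ge0 : a b ab / 0 <= a + b.
  move=> hwlog; have [|ab_lt0] := leP 0 (a + b); first exact: hwlog.
  rewrite -(Omega_even_ext_opp f_ge0 f_int) -(mean_even_ext_opp f_ge0 f_int).
  by apply: hwlog; lra.
have [a_ge0|a_lt0] := leP 0 a.
- exact: Omega_even_ext_itv_ge0.
- exact: Omega_even_ext_straddle.
Qed.
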